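(* For any $m\in\mathbb Z_{\ge1}$, \[\prod_{i=1}^m(x_i+x_i^{-1})\sum_{j=0}^{\lfloor m/2\rfloor}\chi^{\operatorname{Sp}(2m)}_{(1^{m-2j})}=\sum_{b=0}^m\sum_{z=0}^{\lfloor (m-b)/2\rfloor}\xi_2(z,b)\,\chi^{\operatorname{Sp}(2m)}_{(2^{m-b-2z},1^{2z})},\] where $\xi_2(z,b)$ depends only on $z \bmod 2$ and $b\bmod 4$: for $z$ even, $\xi_2=1,1,0,0$ according as $b\equiv0,1,2,3 \pmod 4$; for $z$ odd, $\xi_2=0,-1,-1,0$ according as $b\equiv0,1,2,3\pmod 4$.
   Context: $\chi_\lambda^{\operatorname{Sp}(2m)}=\chi_\lambda^{\operatorname{Sp}(2m)}(x_1^{\pm1},\dots,x_m^{\pm1})$ is the character of the irreducible representation of $\operatorname{Sp}(2m,\mathbb C)$ with highest weight the partition $\lambda$, evaluated at a torus element with eigenvalues $x_1^{\pm1},\dots,x_m^{\pm1}$; $(2^c,1^d)$ is the partition with $c$ parts $2$ followed by $d$ parts $1$; $(1^k)$ has $k$ parts equal to $1$; $\chi_\emptyset=1$. *)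

From mathcomp Require Import all_boot all_order all_algebra.
Set Implicit Arguments. Unset Strict Implicit. Unset Printing Implicit Defensive.
Import Order.TTheory GRing.Theory Num.Theory.
Local Open Scope ring_scope.

(* Partitions are weakly decreasing sequences of naturals; part i (0-indexed)
   is [nth 0 la i], padded with zeros. *)

(* Weyl numerator for Sp(2m): det [ x_j^(l_i) - x_j^(-l_i) ]_{i,j},
   with l_i = la_i + m - i (i 0-indexed, i.e. la_i + m - i + 1 1-indexed). *)
Definition sp_num (F : fieldType) (m : nat) (la : seq nat) (x : 'I_m -> F) : F :=
  \det (\matrix_(i < m, j < m)
          (x j ^+ (nth 0%N la i + (m - i)) - (x j)^-1 ^+ (nth 0%N la i + (m - i)))).

Definition sp_den (F : fieldType) (m : nat) (x : 'I_m -> F) : F := sp_num [::] x.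

(* Symplectic character chi_la^{Sp(2m)}(x_1^{±1},...,x_m^{±1}) via the Weyl
   character formula (valid at regular torus elements, sp_den x != 0). *)
Definition spchar (F : fieldType) (m : nat) (la : seq nat) (x : 'I_m -> F) : F :=
  sp_num la x / sp_den x.

Definition part21 (c d : nat) : seq nat := nseq c 2%N ++ nseq d 1%N.
Definition part1 (k : nat) : seq nat := nseq k 1%N.

Definition xi2 (z b : nat) : int :=
  if ~~ odd z then
    (match (b %% 4)%N with 0 => 1 | 1 => 1 | _ => 0 end)%N%:Z
  else
    - ((match (b %% 4)%N with 1 => 1 | 2 => 1 | _ => 0 end)%N%:Z).

From mathcomp Require Import all_boot all_order all_algebra.
From mathcomp Require Import zify ring.
Set Implicit Arguments. Unset Strict Implicit. Unset Printing Implicit Defensive.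
Import Order.TTheory GRing.Theory Num.Theory.
Local Open Scope ring_scope.

(** Write row [a] for [(x_j^a - x_j^-a)_j], so that [sp_num la] is the
  determinant with rows [la_i + m - i], and multiplying column [j] by
  [x_j + x_j^-1] sends row [a] to row [a+1] + row [a-1].

  By the Pieri rule for a column, [sum_k t^k sp_num (1^k)] is the determinant
  with rows [a + t (a+1)], [a = m, ..., 1]; combining [t = 1] and [t = -1]
  keeps the [k] of the parity of [m], at the cost of a factor 2.  After the
  multiplication the rows are [(a-1) + t a + (a+1) + t (a+2)], and since
  [t^2 = 1], subtracting [t] times the next row leaves [t ((a+2) - (a-2))];
  the two determinants add up to twice the one with rows [(a+2) - (a-2)]
  (row [-1] being minus row [1]).  That determinant is expanded one row at a
  time: the new row either repeats a row or is moved into place by a 3- or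
  4-cycle, and the signs of these cycles are the recursions
  [xi_2(z+2, b) = xi_2(z, b)], [xi_2(0, b+3) = - xi_2(1, b)] and
  [xi_2(1, b+1) = - xi_2(0, b)]. *)

Lemma nth_cat_cons_other {T : Type} (x0 : T) (pre rest : seq T) (u v : T) (k : nat) :
  k != size pre -> nth x0 (pre ++ u :: rest) k = nth x0 (pre ++ v :: rest) k.
Proof.
move=> ne_k; rewrite !nth_cat; case: ltnP => // le_pre_k.
by rewrite -(@subnSK (size pre)) // ltn_neqAle eq_sym ne_k.
Qed.

Section DetRows.
Variables (R : comPzRingType) (n : nat).
Implicit Types (s pre rest : seq 'rV[R]_n) (u v a b c d : 'rV[R]_n).

Definition det_rows s : R := \det (\matrix_(i < n, j < n) nth 0 s i 0 j).

Lemma det_rows_linear pre rest u v (k l : R) : (size pre < n)%N ->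
  det_rows (pre ++ (k *: u + l *: v) :: rest)
  = k * det_rows (pre ++ u :: rest) + l * det_rows (pre ++ v :: rest).
Proof.
move=> lt_pre; set i0 := Ordinal lt_pre.
have ne_i0 i : (lift i0 i : nat) != size pre.
  by rewrite -[size pre]/(nat_of_ord i0) (inj_eq val_inj) eq_sym neq_lift.
apply: (determinant_multilinear (i0 := i0)).
- by apply/rowP => j; rewrite !mxE !nth_cat ltnn subnn /= !mxE.
- by apply/matrixP => i j; rewrite !mxE (nth_cat_cons_other _ _ _ (k *: u + l *: v) (ne_i0 i)).
- by apply/matrixP => i j; rewrite !mxE (nth_cat_cons_other _ _ _ (k *: u + l *: v) (ne_i0 i)).
Qed.

Lemma det_rowsD pre rest u v : (size pre < n)%N ->
  det_rows (pre ++ (u + v) :: rest) = det_rows (pre ++ u :: rest) + det_rows (pre ++ v :: rest).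
Proof. by move=> lt_pre; rewrite -[u]scale1r -[v]scale1r det_rows_linear // !scale1r !mul1r. Qed.

Lemma det_rowsZ pre rest u (k : R) : (size pre < n)%N ->
  det_rows (pre ++ (k *: u) :: rest) = k * det_rows (pre ++ u :: rest).
Proof.
by move=> lt_pre; rewrite -[k *: u]addr0 -(scale0r u) det_rows_linear // mul0r addr0.
Qed.

Lemma det_rowsB pre rest u v : (size pre < n)%N ->
  det_rows (pre ++ (u - v) :: rest) = det_rows (pre ++ u :: rest) - det_rows (pre ++ v :: rest).
Proof. by move=> lt_pre; rewrite -scaleN1r det_rowsD // det_rowsZ // mulN1r. Qed.

Lemma det_rows0 pre rest : (size pre < n)%N -> det_rows (pre ++ 0 :: rest) = 0.
Proof. by move=> lt_pre; rewrite -(scale0r 0) det_rowsZ // mul0r. Qed.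

Lemma det_rows_alternate s i j :
  (i < j < n)%N -> nth 0 s i = nth 0 s j -> det_rows s = 0.
Proof.
case/andP=> lt_ij lt_jn eq_ij; have lt_in := ltn_trans lt_ij lt_jn.
apply: (determinant_alternate (i1 := Ordinal lt_in) (i2 := Ordinal lt_jn)).
  by rewrite -(inj_eq val_inj) /= ltn_eqF.
by move=> k; rewrite !mxE eq_ij.
Qed.

Lemma det_rows_mem pre a s : (size pre + (size s).+1 = n)%N -> a \in s ->
  det_rows (pre ++ a :: s) = 0.
Proof.
move=> size_n /(nthP 0)[k lt_k eq_k].
have lt_kn : (size pre + k.+1 < n)%N.
  by move: lt_k; rewrite -ltnS -(ltn_add2l (size pre)) size_n.
apply: (@det_rows_alternate _ (size pre) (size pre + k.+1)).
  by rewrite lt_kn andbT addnS ltnS leq_addr.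
rewrite !nth_cat ltnn subnn ltnNge leq_addr /= addKn; exact: esym eq_k.
Qed.

Lemma det_rows_dup pre a rest : ((size pre).+1 < n)%N ->
  det_rows (pre ++ a :: a :: rest) = 0.
Proof.
move=> lt_pre; apply: (@det_rows_alternate _ (size pre) (size pre).+1); first by apply/andP.
by rewrite !nth_cat ltnn ltnNge leqnSn /= subnn subSnn.
Qed.

Lemma det_rows_swap pre a b rest : ((size pre).+1 < n)%N ->
  det_rows (pre ++ a :: b :: rest) = - det_rows (pre ++ b :: a :: rest).
Proof.
move=> lt_pre; have lt_pre' : (size pre < n)%N by apply: ltnW.
have lt_rcons c : (size (rcons pre c) < n)%N by rewrite size_rcons.
have rcons_cat c rest' : pre ++ c :: rest' = rcons pre c ++ rest' by rewrite cat_rcons.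
have dup_ab : det_rows (pre ++ (a + b) :: (a + b) :: rest) = 0 by apply: det_rows_dup.
rewrite det_rowsD // !rcons_cat !det_rowsD // -!rcons_cat !det_rows_dup // in dup_ab.
rewrite add0r addr0 in dup_ab.
by apply/eqP; rewrite -addr_eq0 dup_ab.
Qed.

Lemma det_rows_addr pre a b rest (k : R) : ((size pre).+1 < n)%N ->
  det_rows (pre ++ (a + k *: b) :: b :: rest) = det_rows (pre ++ a :: b :: rest).
Proof.
move=> lt_pre; rewrite -[a]scale1r det_rows_linear 1?ltnW // det_rows_dup //.
by rewrite mulr0 addr0 mul1r scale1r.
Qed.

Lemma det_rows_rot3 pre a b c rest : ((size pre).+2 < n)%N ->
  det_rows (pre ++ a :: b :: c :: rest) = det_rows (pre ++ b :: c :: a :: rest).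
Proof.
move=> lt_pre; rewrite det_rows_swap 1?ltnW // -cat_rcons det_rows_swap ?size_rcons //.
by rewrite opprK cat_rcons.
Qed.

Lemma det_rows_rot4 pre a b c d rest : ((size pre).+3 < n)%N ->
  det_rows (pre ++ a :: b :: c :: d :: rest) = - det_rows (pre ++ b :: c :: d :: a :: rest).
Proof.
move=> lt_pre; rewrite det_rows_swap; last by lia.
by rewrite -cat_rcons det_rows_rot3 ?size_rcons // cat_rcons.
Qed.

Lemma det_rows_scale_cols s (w : 'rV[R]_n) :
  det_rows s * \prod_j w 0 j = det_rows [seq r *m diag_mx w | r <- s].
Proof.
rewrite /det_rows -det_diag -det_mulmx; congr (\det _); apply/matrixP => i j.
rewrite mul_mx_diag !mxE; case: (ltnP i (size s)) => [lt_is | le_si].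
  by rewrite (nth_map 0) // mul_mx_diag mxE.
by rewrite !nth_default ?size_map // !mxE mul0r.
Qed.

End DetRows.

Lemma sum_even_terms (R : pzRingType) (g : nat -> R) n :
  \sum_(k < n.+1) (1 + (-1) ^+ k) * g k = 2%:R * \sum_(j < (n./2).+1) g (2 * j)%N.
Proof.
elim: n => [|n IHn]; first by rewrite !big_ord1 expr0 mulr_natl.
rewrite big_ord_recr /= IHn -signr_odd /= uphalf_half.
case: (boolP (odd n)) => [odd_n | even_n] /=; last by rewrite expr1 subrr mul0r addr0.
rewrite add1n [in RHS]big_ord_recr /= mulrDr; congr (_ + _ * g _).
by rewrite -[in LHS](odd_double_half n) odd_n -mul2n; lia.
Qed.

Section TriangleSums.
Variable R : nmodType.

Lemma sum_ord_rev K (F : nat -> R) : \sum_(i < K.+1) F (K - i)%N = \sum_(i < K.+1) F i.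
Proof. by rewrite [RHS](reindex_inj rev_ord_inj). Qed.

Lemma sum_ord_cond_leq N K (F : nat -> R) :
  (K < N)%N -> \sum_(i < N | (i <= K)%N) F i = \sum_(i < K.+1) F i.
Proof. by move=> lt_KN; rewrite (big_ord_widen N). Qed.

Lemma sum_half_range n b (G : nat -> R) : (b <= n)%N ->
  \sum_(z < ((n - b)./2).+1) G z = \sum_(z < n.+1 | (b + 2 * z <= n)%N) G z.
Proof.
move=> le_bn; rewrite (big_ord_widen n.+1); last by rewrite ltnS leq_half_double; lia.
by apply: eq_bigl => z; rewrite ltnS geq_half_double -mul2n; lia.
Qed.

Lemma sum_triangle_flip n (h : nat -> nat -> R) :
  \sum_(b < n.+1) \sum_(z < ((n - b)./2).+1) h z b
  = \sum_(c < n.+1) \sum_(z < ((n - c)./2).+1) h z (n - c - 2 * z)%N.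
Proof.
have by_z (f : nat -> nat -> R) : \sum_(b < n.+1) \sum_(z < ((n - b)./2).+1) f z b
    = \sum_(z < n.+1) \sum_(b < n.+1 | (b <= n - 2 * z)%N && (2 * z <= n)%N) f z b.
  rewrite (eq_bigr (fun b : 'I_n.+1 => \sum_(z < n.+1 | (b + 2 * z <= n)%N) f z b)).
    rewrite (exchange_big_dep xpredT) //; apply: eq_bigr => z _.
    by apply: eq_bigl => b; lia.
  by move=> b _; rewrite (sum_half_range (fun z => f z b)) // -ltnS ltn_ord.
rewrite by_z (by_z (fun z c => h z (n - c - 2 * z)%N)); apply: eq_bigr => z _.
have [le_zn | lt_nz] := leqP (2 * z) n.
  under [LHS]eq_bigl => b do rewrite andbT.
  under [RHS]eq_bigl => b do rewrite andbT.
  rewrite [LHS]sum_ord_cond_leq ?ltnS ?leq_subr //.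
  rewrite [RHS](sum_ord_cond_leq (fun b => h z (n - b - 2 * z)%N)) ?ltnS ?leq_subr // -sum_ord_rev.
  by apply: eq_bigr => c _; rewrite subnAC.
by rewrite !big_pred0 // => b; rewrite andbF.
Qed.
End TriangleSums.

Lemma sum_ord_delta (R : pzSemiRingType) K j (a : nat -> R) (X : R) :
  \sum_(z < K) a z * (if z == j :> nat then X else 0) = if (j < K)%N then a j * X else 0.
Proof.
rewrite (eq_bigr (fun z : 'I_K => if z == j :> nat then a j * X else 0)) => [|z _].
  by rewrite -big_mkcond (big_ord1_eq _ (fun=> a j * X)).
by case: eqP => [-> | _]; rewrite ?mulr0.
Qed.

Lemma sum_step2_parity (R : pzRingType) (f : nat -> R) n :
  2%:R * \sum_(j < (n./2).+1) f (n - 2 * j)%N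
  = \sum_(k < n.+1) f k + (-1) ^+ n * \sum_(k < n.+1) (-1) ^+ k * f k.
Proof.
rewrite -(sum_even_terms (fun k => f (n - k)%N)).
under eq_bigr => k _ do rewrite mulrDl mul1r.
rewrite big_split /= sum_ord_rev mulr_sumr; congr (_ + _).
rewrite -[RHS](sum_ord_rev _ (fun k => (-1) ^+ n * ((-1) ^+ k * f k))); apply: eq_bigr => k _.
have le_kn : (k <= n)%N by rewrite -ltnS.
have -> : (-1) ^+ n = (-1) ^+ k * (-1) ^+ (n - k) :> R by rewrite -exprD subnKC.
by rewrite -mulrA [_ * (_ * f _)]mulrA -exprD addnn -mul2n exprM sqrrN !expr1n mul1r.
Qed.

Lemma xi2S2 z b : xi2 z.+2 b = xi2 z b.
Proof. by rewrite /xi2 /= negbK. Qed.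

Lemma xi2_0_S3 k : xi2 0 k.+3 = - xi2 1 k.
Proof.
rewrite /xi2 /= -addn3 -modnDml.
have : (k %% 4 < 4)%N by rewrite ltn_mod.
by case: (k %% 4)%N => [|[|[|[|r]]]].
Qed.

Lemma xi2_1_S k : xi2 1 k.+1 = - xi2 0 k.
Proof.
rewrite /xi2 /= -addn1 -modnDml.
have : (k %% 4 < 4)%N by rewrite ltn_mod.
by case: (k %% 4)%N => [|[|[|[|r]]]].
Qed.

Section WeylRows.
Variables (F : fieldType) (m : nat) (x : 'I_m -> F).

Definition arow k : 'rV[F]_m := \row_j (x j ^+ k - (x j)^-1 ^+ k).

Lemma arow0 : arow 0 = 0.
Proof. by apply/rowP => j; rewrite !mxE !expr0 subrr. Qed.

Definition weyl_rows n (la : seq nat) : seq 'rV[F]_m :=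
  [seq arow (nth 0%N la i + (n - i)) | i <- iota 0 n].

Lemma size_weyl_rows n la : size (weyl_rows n la) = n.
Proof. by rewrite size_map size_iota. Qed.

Lemma nth_weyl_rows n la i : (i < n)%N ->
  nth 0 (weyl_rows n la) i = arow (nth 0%N la i + (n - i)).
Proof. by move=> lt_in; rewrite (nth_map 0%N) ?size_iota // nth_iota. Qed.

Lemma weyl_rowsS n la :
  weyl_rows n.+1 la = arow (head 0%N la + n.+1) :: weyl_rows n (behead la).
Proof.
rewrite /weyl_rows /= (iotaDl 1 0) -map_comp; congr (_ :: _).
by apply: eq_map => i /=; rewrite nth_behead.
Qed.

Lemma sp_num_det_rows la : sp_num la x = det_rows (weyl_rows m la).
Proof.
congr (\det _); apply/matrixP => i j.
by rewrite !mxE nth_weyl_rows // mxE.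
Qed.

Notation rows21 n c d := (weyl_rows n (part21 c d)).

Lemma rows21S2 n c d : rows21 n.+1 c.+1 d = arow n.+3 :: rows21 n c d.
Proof. by rewrite weyl_rowsS add2n. Qed.

Lemma rows21S1 n d : rows21 n.+1 0 d.+1 = arow n.+2 :: rows21 n 0 d.
Proof. by rewrite weyl_rowsS add1n. Qed.

Lemma rows21S0 n : rows21 n.+1 0 0 = arow n.+1 :: rows21 n 0 0.
Proof. by rewrite weyl_rowsS. Qed.

Lemma nth_part21 c d i : nth 0%N (part21 c d) i = ((i < c) + (i < c + d))%N.
Proof.
rewrite nth_cat size_nseq; case: ltnP => [lt_ic | le_ci].
  by rewrite nth_nseq lt_ic ltn_addr.
by rewrite nth_nseq ltn_subLR //; case: (i < c + d)%N.
Qed.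

Definition desc_rows (f : nat -> 'rV[F]_m) n := [seq f (n - i)%N | i <- iota 0 n].

Lemma desc_rowsS f n : desc_rows f n.+1 = f n.+1 :: desc_rows f n.
Proof. by rewrite /desc_rows /= (iotaDl 1 0) -map_comp. Qed.

Lemma map_desc_rows (h : 'rV[F]_m -> 'rV[F]_m) f n :
  map h (desc_rows f n) = desc_rows (h \o f) n.
Proof. by rewrite -map_comp. Qed.

Lemma eq_desc_rows f g n : (forall a, (0 < a)%N -> f a = g a) ->
  desc_rows f n = desc_rows g n.
Proof.
by move=> eq_fg; apply/eq_in_map => i; rewrite mem_iota => /andP[_ lt_in]; rewrite eq_fg ?subn_gt0.
Qed.

Definition pieri_row (t : F) a := arow a + t *: arow a.+1.

Lemma det_rows_pieri_col t n pre : (size pre + n = m)%N ->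
  \sum_(k < n.+1) t ^+ k * det_rows (pre ++ rows21 n 0 k)
  = det_rows (pre ++ desc_rows (pieri_row t) n).
Proof.
elim: n pre => [|n IHn] pre size_n; first by rewrite big_ord1 expr0 mul1r.
have lt_pre : (size pre < m)%N by lia.
have size_rcons a : (size (rcons pre a) + n = m)%N by rewrite size_rcons addSnnS.
rewrite desc_rowsS det_rowsD // det_rowsZ // -!cat_rcons -!IHn //.
rewrite big_ord_recl expr0 mul1r rows21S0 -cat_rcons mulr_sumr; congr (_ + _).
  rewrite big_ord_recl expr0 mul1r big1 ?addr0 // => k _.
  rewrite cat_rcons det_rows_mem ?mulr0 // ?size_weyl_rows //.
  apply/(nthP 0); exists 0%N; first by rewrite size_weyl_rows (leq_ltn_trans _ (ltn_ord k)).
  by rewrite nth_weyl_rows ?(leq_ltn_trans _ (ltn_ord k)) // nth_part21 /= subn0 add0n add1n.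
by apply: eq_bigr => k _; rewrite /= rows21S1 cat_rcons exprS mulrA.
Qed.

Hypothesis x_neq0 : forall i, x i != 0.

Definition xaddinv : 'rV[F]_m := \row_j (x j + (x j)^-1).

Lemma arow_mul_xaddinv a : (0 < a)%N -> arow a *m diag_mx xaddinv = arow a.+1 + arow a.-1.
Proof.
case: a => // a _; apply/rowP => j; rewrite mul_mx_diag !mxE /=.
have xV : x j * (x j)^-1 = 1 by rewrite mulfV.
have e1 : x j ^+ a.+1 * (x j)^-1 = x j ^+ a by rewrite exprSr -mulrA xV mulr1.
have e2 : (x j)^-1 ^+ a.+1 * x j = (x j)^-1 ^+ a by rewrite exprSr -mulrA mulVf ?mulr1.
by rewrite mulrBl !mulrDr e1 e2 -!exprSr; ring.
Qed.

Definition pieri_row_mul (t : F) a := arow a.-1 + t *: arow a + arow a.+1 + t *: arow a.+2.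

Lemma map_pieri_row_mul t n :
  [seq r *m diag_mx xaddinv | r <- desc_rows (pieri_row t) n]
  = desc_rows (pieri_row_mul t) n.
Proof.
rewrite map_desc_rows; apply: eq_desc_rows => a a_gt0 /=.
rewrite mulmxDl -scalemxAl !arow_mul_xaddinv //.
by apply/rowP => j; rewrite /pieri_row_mul !mxE; ring.
Qed.

(* Row [1] is [arow 3 - arow (-1)], and [x^-1 - x = - (x - x^-1)]. *)
Definition arow_pm2 a := if a == 1%N then arow 3 + arow 1 else arow a.+2 - arow a.-2.

Lemma pieri_row_mul_sub_prev t a : t ^+ 2 = 1 -> (1 < a)%N ->
  pieri_row_mul t a + (- t) *: pieri_row_mul t a.-1 = t *: arow_pm2 a.
Proof.
move=> t2 a_gt1; rewrite /arow_pm2 gtn_eqF //; case: a a_gt1 => [|[|a]] // _.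
have tt : t * t = 1 by rewrite -expr2.
apply/rowP => j; rewrite /pieri_row_mul !mxE /=; pose G k := x j ^+ k - (x j)^-1 ^+ k.
transitivity (t * (G a.+4 - G a) + (1 - t * t) * (G a.+1 + G a.+3)); first by rewrite /G; ring.
by rewrite tt subrr mul0r addr0.
Qed.

Lemma det_rows_pieri_row_mul_step t n pre : t ^+ 2 = 1 -> (size pre + n.+2 = m)%N ->
  det_rows (pre ++ desc_rows (pieri_row_mul t) n.+2)
  = t * det_rows (rcons pre (arow_pm2 n.+2) ++ desc_rows (pieri_row_mul t) n.+1).
Proof.
move=> t2 size_n; have lt_pre : ((size pre).+1 < m)%N by lia.
rewrite desc_rowsS [desc_rows _ n.+1]desc_rowsS.
rewrite -(det_rows_addr _ _ _ (- t)) // pieri_row_mul_sub_prev // det_rowsZ 1?ltnW //.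
by rewrite cat_rcons -desc_rowsS.
Qed.

Lemma det_rows_pieri_row_mul n pre : (size pre + n.+1 = m)%N ->
  det_rows (pre ++ desc_rows (pieri_row_mul 1) n.+1)
    + (-1) ^+ n.+1 * det_rows (pre ++ desc_rows (pieri_row_mul (-1)) n.+1)
  = 2%:R * det_rows (pre ++ desc_rows arow_pm2 n.+1).
Proof.
elim: n pre => [|n IHn] pre size_n.
  have lt_pre : (size pre < m)%N by lia.
  rewrite !desc_rowsS /desc_rows /= expr1 mulN1r -det_rowsB //.
  have -> : pieri_row_mul 1 1 - pieri_row_mul (-1) 1 = 2%:R *: arow_pm2 1%N.
    by apply/rowP => j; rewrite /pieri_row_mul /arow_pm2 !mxE; ring.
  by rewrite det_rowsZ.
have size_rcons : (size (rcons pre (arow_pm2 n.+2)) + n.+1 = m)%N by rewrite size_rcons addSnnS.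
have sqr1 : (1 : F) ^+ 2 = 1 by rewrite expr1n.
have sqrN1 : (-1 : F) ^+ 2 = 1 by rewrite sqrrN expr1n.
rewrite (det_rows_pieri_row_mul_step sqr1 size_n) (det_rows_pieri_row_mul_step sqrN1 size_n).
rewrite exprS !mulN1r mulrNN mul1r.
by rewrite IHn // cat_rcons -desc_rowsS.
Qed.


(* Prepending [arow M] to the rows of (2^c, 1^2z) in [M+1] variables repeats a
   row, except in the three cases where a 3- or 4-cycle sorts the rows into
   those of a column in [M+2] variables. *)
Lemma det_rows_insert pre M c z : (size pre + M.+2 = m)%N -> (c + 2 * z <= M.+1)%N ->
  det_rows (pre ++ arow M :: rows21 M.+1 c (2 * z))
  = if c == 3%N then - det_rows (pre ++ rows21 M.+2 0 (2 * z).+4)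
    else if (c == 2%N) && (z == 0%N :> nat) then det_rows (pre ++ rows21 M.+2 0 2)
    else if (c == 0%N) && (z == 1%N :> nat) then det_rows (pre ++ rows21 M.+2 0 0)
    else 0.
Proof.
move=> size_pre le_cz; case: ifP => [/eqP c3 | c_neq3].
  case: M size_pre le_cz => [|[|M]] size_pre le_cz; try lia.
  have lt_pre : ((size pre).+3 < m)%N by lia.
  by rewrite c3 !rows21S2 !rows21S1 det_rows_rot4.
case: ifP => [/andP[/eqP c2 /eqP z0] | not20].
  case: M size_pre le_cz => [|M] size_pre le_cz; first lia.
  have lt_pre : ((size pre).+2 < m)%N by lia.
  by rewrite c2 z0 !rows21S2 !rows21S1 rows21S0 det_rows_rot3.
case: ifP => [/andP[/eqP c0 /eqP z1] | not01].
  case: M size_pre le_cz => [|M] size_pre le_cz; first lia.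
  have lt_pre : ((size pre).+2 < m)%N by lia.
  by rewrite c0 z1 !rows21S1 !rows21S0 det_rows_rot3.
case: M size_pre le_cz => [|M] size_pre le_cz.
  have lt_pre : (size pre < m)%N by lia.
  by rewrite arow0 det_rows0.
apply: det_rows_mem; first by rewrite size_weyl_rows.
have [i lt_i eq_i] : exists2 i, (i < M.+2)%N & ((i < c) + (i < c + 2 * z) + (M.+2 - i) = M.+1)%N.
  have [le4c | ltc4] := leqP 4 c; first by exists 3%N; lia.
  by have [le_cz1 | lt1cz] := leqP (c + 2 * z) 1; [exists 1%N | exists 2%N]; lia.
apply/(nthP 0); exists i; rewrite ?size_weyl_rows // nth_weyl_rows // nth_part21.
by rewrite eq_i.
Qed.

(* The terms with [c] parts equal to 2; the theorem's index is [b = n - c - 2z]. *)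
Definition xi_terms n c pre := \sum_(z < ((n - c)./2).+1)
  (xi2 z (n - c - 2 * z))%:~R * det_rows (pre ++ rows21 n c (2 * z)).

Definition xi_expansion n pre := \sum_(c < n.+1) xi_terms n c pre.

Lemma xi_expansionS n pre :
  xi_expansion n.+1 pre = xi_terms n.+1 0 pre + xi_expansion n (rcons pre (arow n.+3)).
Proof.
rewrite /xi_expansion big_ord_recl; congr (_ + _); apply: eq_bigr => c _.
by apply: eq_bigr => z _; rewrite rows21S2 cat_rcons.
Qed.

Section Insertion.
Variables (pre : seq 'rV[F]_m) (M : nat).
Hypothesis size_pre : (size pre + M.+2 = m)%N.

Local Notation D k := (det_rows (pre ++ rows21 M.+2 0 k)).

Lemma xi_terms_insert c : (c <= M.+1)%N -> xi_terms M.+1 c (rcons pre (arow M)) =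
  \sum_(z < ((M.+1 - c)./2).+1) (xi2 z (M.+1 - c - 2 * z))%:~R *
    (if c == 3%N then - D (2 * z).+4 else if (c == 2%N) && (z == 0%N :> nat) then D 2
     else if (c == 0%N) && (z == 1%N :> nat) then D 0 else 0).
Proof.
move=> le_cM; apply: eq_bigr => z _; rewrite cat_rcons det_rows_insert //.
by have := ltn_ord z; rewrite ltnS geq_half_double -mul2n; lia.
Qed.

Lemma xi_terms_insert0 : xi_terms M.+1 0 (rcons pre (arow M)) = (xi2 1 M.-1)%:~R * D 0.
Proof.
rewrite xi_terms_insert //= (sum_ord_delta _ _ (fun z => (xi2 z (M.+1 - 0 - 2 * z))%:~R)).
case: M size_pre => [|M'] _ /=; first by rewrite /xi2 /= oppr0 mul0r.
by rewrite subn0 muln1 !subSS subn0.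
Qed.

Lemma xi_terms_insert1 : xi_terms M.+1 1 (rcons pre (arow M)) = 0.
Proof. by rewrite xi_terms_insert // big1 // => z _; rewrite mulr0. Qed.

Lemma xi_terms_insert2 : (0 < M)%N ->
  xi_terms M.+1 2 (rcons pre (arow M)) = (xi2 0 M.-1)%:~R * D 2.
Proof.
move=> M_gt0; rewrite xi_terms_insert //.
rewrite (sum_ord_delta _ _ (fun z => (xi2 z (M.+1 - 2 - 2 * z))%:~R)) /=.
by case: M size_pre M_gt0 => // M' _ _; rewrite muln0 subn0 !subSS subn0.
Qed.

Lemma xi_terms_insert3 : (1 < M)%N -> xi_terms M.+1 3 (rcons pre (arow M)) =
  - \sum_(z < ((M - 2)./2).+1) (xi2 z (M - 2 - 2 * z))%:~R * D (2 * z).+4.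
Proof.
move=> M_gt1; rewrite xi_terms_insert // -sumrN.
by apply: eq_bigr => z _; rewrite mulrN.
Qed.

Lemma xi_terms_insert_ge4 c : (4 <= c <= M.+1)%N -> xi_terms M.+1 c (rcons pre (arow M)) = 0.
Proof.
case: c => [|[|[|[|c]]]] // /andP[_ le_cM].
by rewrite xi_terms_insert // big1 // => z _; rewrite mulr0.
Qed.

End Insertion.

Lemma xi_terms0_split n pre : xi_terms n.+2 0 pre
  = (xi2 0 n.+2)%:~R * det_rows (pre ++ rows21 n.+2 0 0)
    + (xi2 1 n)%:~R * det_rows (pre ++ rows21 n.+2 0 2)
    + \sum_(z < n./2) (xi2 z (n - 2 - 2 * z))%:~R * det_rows (pre ++ rows21 n.+2 0 (2 * z).+4).
Proof.
rewrite /xi_terms; have -> : ((n.+2 - 0)./2 = (n./2).+1)%N by rewrite subn0.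
rewrite big_ord_recl big_ord_recl addrA; congr (_ + _ + _).
  by rewrite /= subn0 muln1 !subSS subn0.
apply: eq_bigr => z _; rewrite !lift0 xi2S2.
have -> : (n.+2 - 0 - 2 * z.+2 = n - 2 - 2 * z)%N by lia.
by have -> : (2 * z.+2 = (2 * z).+4)%N by lia.
Qed.

Lemma xi_expansion_insert pre M : (size pre + M.+2 = m)%N ->
  xi_expansion M.+1 (rcons pre (arow M)) = - xi_terms M.+2 0 pre.
Proof.
move=> size_pre; rewrite /xi_expansion !big_ord_recl !lift0 xi_terms_insert0 //.
rewrite xi_terms_insert1 // add0r xi_terms0_split.
case: M size_pre => [|[|M]] size_pre.
- by rewrite !big_ord0 /xi2 /= !(oppr0, mulr0z, mul0r, addr0).
- rewrite big_ord1 big_ord0 /= xi_terms_insert2 //.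
  by rewrite /xi2 /= !(oppr0, mulr0z, mul0r, add0r, addr0) mulrNz mulNr opprK.
set pre' := rcons pre (arow M.+2).
have -> : \sum_(i < M.+2) xi_terms M.+3 (lift ord0 (lift ord0 i)) pre'
    = xi_terms M.+3 2 pre' + xi_terms M.+3 3 pre'.
  rewrite big_ord_recl big_ord_recl big1 ?addr0 // => c _.
  by rewrite !lift0 xi_terms_insert_ge4 //; have := ltn_ord c; lia.
rewrite xi_terms_insert2 // xi_terms_insert3 // (xi2_0_S3 M.+1) (xi2_1_S M.+1) !mulrNz !mulNr.
have -> : ((M.+2 - 2)./2).+1 = M.+2./2 by rewrite subSS subSS subn0.
by rewrite !opprD !opprK addrA.
Qed.

Lemma det_rows_arow_pm2 n pre : (size pre + n.+1 = m)%N ->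
  det_rows (pre ++ desc_rows arow_pm2 n.+1) = xi_expansion n.+1 pre.
Proof.
elim: n pre => [|n IHn] pre size_n; have lt_pre : (size pre < m)%N by lia.
  rewrite desc_rowsS /desc_rows /= det_rowsD // addrC.
  by rewrite /xi_expansion /xi_terms big_ord_recl !big_ord1 /= !mul1r.
have size_rcons a : (size (rcons pre a) + n.+1 = m)%N by rewrite size_rcons addSnnS.
have arow_pm2S : arow_pm2 n.+2 = arow n.+4 - arow n by [].
rewrite desc_rowsS arow_pm2S det_rowsB // -(cat_rcons (arow n.+4)) -(cat_rcons (arow n)) !IHn //.
by rewrite [RHS]xi_expansionS xi_expansion_insert // opprK addrC.
Qed.

Lemma prod_mul_sum_sp_num_part1 : (2%:R : F) != 0 -> (0 < m)%N ->
  (\prod_(i < m) (x i + (x i)^-1)) * (\sum_(j < (m./2).+1) sp_num (part1 (m - 2 * j)) x)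
  = \sum_(b < m.+1) \sum_(z < ((m - b)./2).+1)
      (xi2 z b)%:~R * sp_num (part21 (m - b - 2 * z) (2 * z)) x.
Proof.
move=> two_neq0 m_gt0; apply: (mulfI two_neq0).
have m_eq : (size ([::] : seq 'rV[F]_m) + m.-1.+1 = m)%N by rewrite prednK.
have parity : 2%:R * \sum_(j < (m./2).+1) sp_num (part1 (m - 2 * j)) x
    = det_rows (desc_rows (pieri_row 1) m) + (-1) ^+ m * det_rows (desc_rows (pieri_row (-1)) m).
  under eq_bigr => j _ do rewrite sp_num_det_rows.
  rewrite (sum_step2_parity (fun k => det_rows (rows21 m 0 k))).
  rewrite -!(det_rows_pieri_col _ (pre := [::])) ?prednK //.
  by congr (_ + _); apply: eq_bigr => k _; rewrite expr1n mul1r.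
have prod_cols : \prod_(i < m) (x i + (x i)^-1) = \prod_j xaddinv 0 j.
  by apply: eq_bigr => j _; rewrite mxE.
rewrite mulrCA parity mulrDr mulrCA prod_cols ![_ * det_rows _]mulrC !det_rows_scale_cols.
have pieri_pm2 := det_rows_pieri_row_mul m_eq; have pm2_xi := det_rows_arow_pm2 m_eq.
rewrite !cat0s prednK // in pieri_pm2 pm2_xi.
rewrite !map_pieri_row_mul pieri_pm2 pm2_xi; congr (_ * _).
rewrite (sum_triangle_flip _
  (fun z b => (xi2 z b)%:~R * sp_num (part21 (m - b - 2 * z) (2 * z)) x)).
apply: eq_bigr => c _; apply: eq_bigr => z _; rewrite sp_num_det_rows.
have := ltn_ord z; rewrite ltnS geq_half_double -mul2n => le_zc.
have := ltn_ord c; rewrite ltnS => le_cm.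
by have -> : (m - (m - c - 2 * z) - 2 * z = c)%N by lia.
Qed.

End WeylRows.

Unset Implicit Arguments.

Theorem mainTheorem8 (F : numClosedFieldType) (m : nat) (x : 'I_m -> F) :
  (1 <= m)%N ->
  (forall i, x i != 0) ->
  sp_den x != 0 ->
  (\prod_(i < m) (x i + (x i)^-1)) *
    (\sum_(j < (m./2).+1) spchar (part1 (m - 2 * j)) x)
  = \sum_(b < m.+1) \sum_(z < ((m - b)./2).+1)
      (xi2 z b)%:~R * spchar (part21 (m - b - 2 * z) (2 * z)) x.
Proof.
move=> m_gt0 x_neq0 _; have two_neq0 : (2%:R : F) != 0 by rewrite pnatr_eq0.
rewrite /spchar -mulr_suml mulrA prod_mul_sum_sp_num_part1 // !mulr_suml.
by apply: eq_bigr => b _; rewrite mulr_suml; apply: eq_bigr => z _; rewrite mulrA.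
Qed.
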